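(* Let $\mathbb X,\mathbb Y$ be bounded $\ell$-connected domains, $h\in\mathfrak D(\mathbb X,\mathbb Y)$, and $w\in\partial\mathbb Y$. If $h^{-1}(w)$ intersects a domain $\Omega$ compactly contained in $\mathbb X$, then $h^{-1}(w)$ also intersects $\partial\Omega$.
   Context: A bounded $\ell$-connected domain ($1\le \ell<\infty$) is a bounded domain in $\mathbb C$ whose boundary consists of $\ell$ disjoint continua. Denote the boundary components of $\mathbb X$ by $\mathfrak X_1,\dots,\mathfrak X_\ell$ and those of $\mathbb Y$ by $\Upsilon_1,\dots,\Upsilon_\ell$. A sequence of maps $h_k:\mathbb X\to\mathbb Y$ converges $cd$-uniformly to $h:\mathbb X\to\mathbb R^2$ if $h_k\to h$ uniformly on compact subsets of $\mathbb X$ and $\operatorname{dist}(h_k(x),\partial\mathbb Y)\to\operatorname{dist}(h(x),\partial\mathbb Y)$ uniformly in $x\in\mathbb X$. $\mathscr H_{cd}(\mathbb X,\mathbb Y)$ denotes the class of $cd$-limits of homeomorphisms $h_k$ of $\mathbb X$ onto $\mathbb Y$ satisfying the (fixed) boundary correspondence $h_k(x)\to\Upsilon_\nu$ as $x\to\mathfrak X_\nu$, $\nu=1,\dots,\ell$. A deformation is a map $h\in\mathscr H_{cd}(\mathbb X,\mathbb Y)$ with $h\in\mathscr W^{1,2}(\mathbb X,\mathbb R^2)$, Jacobian $J_h=|h_z|^2-|h_{\bar z}|^2\ge0$ a.e., and $\iint_{\mathbb X}J_h\le|\mathbb Y|$; the class of deformations is $\mathfrak D(\mathbb X,\mathbb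 Y)$. *)

(* The plane R^2 = C is modelled as R * R. *)
From HB Require Import structures.
From mathcomp Require Import all_boot all_order all_algebra.
From mathcomp Require Import all_classical all_reals all_analysis.
Set Implicit Arguments. Unset Strict Implicit. Unset Printing Implicit Defensive.
Import Order.TTheory GRing.Theory Num.Theory.
Import numFieldNormedType.Exports.
Local Open Scope classical_set_scope.
Local Open Scope ring_scope.

Section Defs.
Variable R : realType.

Local Notation pt := (R * R)%type.

Definition edist (p q : pt) : R :=
  Num.sqrt ((p.1 - q.1) ^+ 2 + (p.2 - q.2) ^+ 2).

Definition sdist (p : pt) (A : set pt) : R := inf [set edist p q | q in A].

Definition bd (A : set pt) : set pt := closure A `\` interior A.

Definition bounded_pt (A : set pt) : Prop :=
  exists M : R, forall p, A p -> edist p (0, 0) <= M.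

Definition domain (A : set pt) : Prop := open A /\ connected A /\ A !=set0.

Definition continuum (C : set pt) : Prop := compact C /\ connected C /\ C !=set0.

Definition ell_connected (l : nat) (X : set pt) (B : 'I_l -> set pt) : Prop :=
  [/\ (1 <= l)%N, domain X /\ bounded_pt X,
      (forall i, continuum (B i)),
      (forall i j, i != j -> setI (B i) (B j) = set0) &
      bd X = \bigcup_i B i].

Definition homeo_onto (X Y : set pt) (f : pt -> pt) : Prop :=
  exists g : pt -> pt,
    [/\ (forall x, X x -> Y (f x)) /\ (forall y, Y y -> X (g y)),
        (forall x, X x -> g (f x) = x), (forall y, Y y -> f (g y) = y),
        {within X, continuous f} & {within Y, continuous g}].

Definition bdry_corr (l : nat) (X : set pt) (BX BY : 'I_l -> set pt)
  (f : pt -> pt) : Prop :=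
  forall i (e : R), 0 < e -> exists2 d : R, 0 < d &
    forall x, X x -> sdist x (BX i) < d -> sdist (f x) (BY i) < e.

Definition cd_conv (X Y : set pt) (hk : nat -> pt -> pt) (h : pt -> pt) : Prop :=
  (forall K, compact K -> K `<=` X ->
     forall e : R, 0 < e -> exists N, forall k, (N <= k)%N ->
       forall x, K x -> edist (hk k x) (h x) < e) /\
  (forall e : R, 0 < e -> exists N, forall k, (N <= k)%N ->
       forall x, X x -> `| sdist (hk k x) (bd Y) - sdist (h x) (bd Y) | < e).

Definition H_cd (l : nat) (X Y : set pt) (BX BY : 'I_l -> set pt)
  (h : pt -> pt) : Prop :=
  exists hk : nat -> pt -> pt,
    (forall k, homeo_onto X Y (hk k) /\ bdry_corr X BX BY (hk k)) /\
    cd_conv X Y hk h.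

Definition leb2 := ((@lebesgue_measure R) \x (@lebesgue_measure R))%E.

Fixpoint iter_der (vs : seq pt) (f : pt -> R) : pt -> R :=
  match vs with
  | [::] => f
  | v :: vs' => fun x => 'D_v (iter_der vs' f) x
  end.

Definition smooth (f : pt -> R) : Prop :=
  forall vs : seq pt, continuous (iter_der vs f) /\
    forall (v x : pt), derivable (iter_der vs f) x v.

Definition test_fun (X : set pt) (phi : pt -> R) : Prop :=
  smooth phi /\
  exists K, [/\ compact K, K `<=` X & forall x, ~ K x -> phi x = 0].

Definition e1 : pt := (1, 0).
Definition e2 : pt := (0, 1).

Definition L1loc (X : set pt) (u : pt -> R) : Prop :=
  measurable_fun X u /\
  forall K, compact K -> K `<=` X -> leb2.-integrable K (EFin \o u).

Definition weak_deriv (X : set pt) (v : pt) (u g : pt -> R) : Prop :=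
  L1loc X u /\ L1loc X g /\
  forall phi, test_fun X phi ->
    (\int[leb2]_(x in X) (u x * 'D_v phi x)%:E
     = - \int[leb2]_(x in X) (g x * phi x)%:E)%E.

Definition L2 (X : set pt) (u : pt -> R) : Prop :=
  measurable_fun X u /\ (\int[leb2]_(x in X) ((u x) ^+ 2)%:E < +oo)%E.

(* h in W^{1,2}(X, R^2) with weak partials d i j = d h_i / d x_j, and
   the Jacobian J_h = |h_z|^2 - |h_zbar|^2 = det Dh is >= 0 a.e. with
   integral at most |Y| *)
Definition deformation (l : nat) (X Y : set pt) (BX BY : 'I_l -> set pt)
  (h : pt -> pt) : Prop :=
  H_cd X Y BX BY h /\
  exists d11 d12 d21 d22 : pt -> R,
    [/\ L2 X (fun x => (h x).1) /\ L2 X (fun x => (h x).2),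
        [/\ L2 X d11, L2 X d12, L2 X d21 & L2 X d22],
        [/\ weak_deriv X e1 (fun x => (h x).1) d11,
            weak_deriv X e2 (fun x => (h x).1) d12,
            weak_deriv X e1 (fun x => (h x).2) d21 &
            weak_deriv X e2 (fun x => (h x).2) d22],
        {ae leb2, forall x, X x -> 0 <= d11 x * d22 x - d12 x * d21 x} &
        (\int[leb2]_(x in X) (d11 x * d22 x - d12 x * d21 x)%:E <= leb2 Y)%E].

End Defs.

(* Suppose h^{-1}(w) meets Omega but not its boundary, and let rho(p) be the
   l^1 distance from p to w.  As a uniform limit of the continuous functions
   rho o h_k on the closure of Omega, rho o h is continuous there; it is
   positive on the compact boundary of Omega, hence at least some d > 0, and
   it vanishes somewhere in Omega.  For k large, rho o h_k is within d/2 of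
   rho o h, so its minimum over the closure of Omega is attained at a point x
   of Omega.  But h_k is a homeomorphism onto Y and w lies outside the open
   set Y, so moving h_k(x) slightly towards w inside Y and pulling back by
   h_k gives a point of Omega where rho o h_k is smaller. *)
From Pilot Require Import Defs.
From HB Require Import structures.
From mathcomp Require Import all_boot all_order all_algebra.
From mathcomp Require Import all_classical all_reals all_analysis.
From mathcomp Require Import ring lra.
Set Implicit Arguments. Unset Strict Implicit. Unset Printing Implicit Defensive.
Import Order.TTheory GRing.Theory Num.Theory.
Import numFieldNormedType.Exports.
Local Open Scope classical_set_scope.
Local Open Scope ring_scope.

Lemma continuous_within_uniform_approx (T : topologicalType) (R : realType)
    (A : set T) (fk : nat -> T -> R) (f : T -> R) :
  (forall k, {within A, continuous fk k}) ->
  (forall e, 0 < e -> exists k, forall x, A x -> `|fk k x - f x| < e) ->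
  {within A, continuous f}.
Proof.
move=> fk_cont fk_approx; apply/subspace_continuousP => x Ax.
apply/cvgrPdist_lt => e e_gt0.
have e3_gt0 : 0 < e / 3 by rewrite divr_gt0.
have [k fkx] := fk_approx _ e3_gt0.
have /subspace_continuousP/(_ x Ax)/cvgrPdist_lt/(_ _ e3_gt0) := fk_cont k.
move=> near_fkx; apply: filterS2 near_fkx (near_withinT A (nbhs_filter x)).
move=> t fkt At; have := fkx x Ax; have := fkx t At.
have -> : f x - f t = - (fk k x - f x) + (fk k x - fk k t) + (fk k t - f t).
  by ring.
move: (fk k x - f x) (fk k x - fk k t) (fk k t - f t) fkt => a b c b_lt c_lt a_lt.
have := ler_normD (- a + b) c; have := ler_normD (- a) b; rewrite normrN; lra.
Qed.

Lemma compact_bd_closure (R : realType) (A : set (R * R)) :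
  compact (closure A) -> compact (bd A).
Proof.
move=> cA; apply: compact_closedI => //.
by rewrite closedC; exact: open_interior.
Qed.

Lemma compact_pos_lower_bound (T : topologicalType) (R : realType)
    (A : set T) (f : T -> R) :
  compact A -> {within A, continuous f} -> (forall x, A x -> 0 < f x) ->
  exists2 d, 0 < d & forall x, A x -> d <= f x.
Proof.
move=> cA fA f_gt0; have [[x0 Ax0]|A0] := pselect (A !=set0); last first.
  by exists 1 => // x Ax; exfalso; apply: A0; exists x.
have [c /set_mem Ac c_min] := compact_EVT_min (ex_intro _ x0 Ax0) cA fA.
by exists (f c); [exact: f_gt0 | move=> x Ax; apply: c_min; rewrite inE].
Qed.

Lemma approx_argmin_notin (T : topologicalType) (R : realType)
    (K B : set T) (g f : T -> R) (d : R) (x0 : T) :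
  compact K -> {within K, continuous g} ->
  (forall x, K x -> `|g x - f x| < d / 2) ->
  K x0 -> f x0 = 0 -> (forall x, B x -> d <= f x) ->
  exists2 x, K x /\ ~ B x & forall y, K y -> g x <= g y.
Proof.
move=> cK gK g_approx Kx0 fx0 f_ge.
have [x /set_mem Kx x_min] := compact_EVT_min (ex_intro _ x0 Kx0) cK gK.
exists x; last by move=> y Ky; apply: x_min; rewrite inE.
split=> // Bx; have gx_le := x_min x0 (mem_set Kx0).
have := g_approx x0 Kx0; have := g_approx x Kx; have := f_ge x Bx.
rewrite fx0 subr0 !ltr_norml; lra.
Qed.

Section L1Distance.
Variable R : realType.
Implicit Types p q w : R * R.

(* The l^1 distance avoids the square root of [edist] while being comparable
   to it, which is all the argument needs. *)
Definition l1dist p q : R := `|p.1 - q.1| + `|p.2 - q.2|.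

Lemma l1dist_ge0 p q : 0 <= l1dist p q.
Proof. by rewrite addr_ge0. Qed.

Lemma l1dist_eq0 p q : l1dist p q = 0 -> p = q.
Proof.
move/eqP; rewrite paddr_eq0 // !normr_eq0 !subr_eq0 => /andP[/eqP e1 /eqP e2].
by case: p q e1 e2 => [a b] [c d] /= -> ->.
Qed.

Lemma l1dist_gt0 p q : p <> q -> 0 < l1dist p q.
Proof. by move=> pq; rewrite lt_def l1dist_ge0 andbT; apply/eqP=> /l1dist_eq0. Qed.

Lemma l1distxx p : l1dist p p = 0.
Proof. by rewrite /l1dist !subrr normr0 addr0. Qed.

Lemma continuous_l1dist w : continuous (l1dist ^~ w).
Proof.
move=> p; apply: cvgD; apply: cvg_norm; apply: cvgB;
  solve [exact: cvg_fst | exact: cvg_snd | exact: cvg_cst].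
Qed.

Lemma edist_ge_norm1 p q : `|p.1 - q.1| <= Defs.edist p q.
Proof. by rewrite /Defs.edist -sqrtr_sqr ler_sqrt ?lerDl ?addr_ge0 ?sqr_ge0. Qed.

Lemma edist_ge_norm2 p q : `|p.2 - q.2| <= Defs.edist p q.
Proof. by rewrite /Defs.edist -sqrtr_sqr ler_sqrt ?lerDr ?addr_ge0 ?sqr_ge0. Qed.

Lemma l1dist_lipschitz p q w : `|l1dist p w - l1dist q w| <= 2 * Defs.edist p q.
Proof.
have dist_norm (a b c : R) : `| `|a - c| - `|b - c| | <= `|a - b|.
  by apply: le_trans (ler_dist_dist _ _) _; rewrite opprB addrA subrK.
rewrite /l1dist.
have -> : `|p.1 - w.1| + `|p.2 - w.2| - (`|q.1 - w.1| + `|q.2 - w.2|)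
  = (`|p.1 - w.1| - `|q.1 - w.1|) + (`|p.2 - w.2| - `|q.2 - w.2|) by ring.
apply: le_trans (ler_normD _ _) _.
have := dist_norm p.1 q.1 w.1; have := dist_norm p.2 q.2 w.2.
have := edist_ge_norm1 p q; have := edist_ge_norm2 p q; lra.
Qed.

Lemma l1dist_segment p w t : 0 <= t <= 1 ->
  l1dist (p + t *: (w - p)) w = (1 - t) * l1dist p w.
Proof.
case/andP=> t_ge0 t_le1; rewrite /l1dist /= mulrDr.
have seg (a b : R) : a + t * (b - a) - b = (1 - t) * (a - b) by ring.
by rewrite !seg !normrM ger0_norm ?subr_ge0.
Qed.

Lemma l1dist_no_local_min p w (U : set (R * R)) :
  p <> w -> nbhs p U -> exists2 q, U q & l1dist q w < l1dist p w.
Proof.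
move=> pw Up.
have seg_cvg : p + t *: (w - p) @[t --> (0:R)] --> p + 0 *: (w - p).
  apply: cvgD; first exact: cvg_cst.
  by apply: cvgZ; [exact: cvg_id | exact: cvg_cst].
rewrite scale0r addr0 in seg_cvg.
have : \forall t \near (0:R)^'+, (U (p + t *: (w - p)) /\ 0 < t) /\ t < 1.
  apply: filterI; last exact: nbhs_right_lt.
  apply: filterI; last exact: nbhs_right_gt.
  exact: (@cvg_within _ (nbhs (0:R)) _ [set u | 0 < u] _ (seg_cvg _ Up)).
move=> /filter_ex[t [[Ut t_gt0] t_lt1]]; exists (p + t *: (w - p)) => //.
rewrite l1dist_segment ?ltW ?t_gt0 //.
by have := l1dist_gt0 pw; move: (l1dist p w) => r; nra.
Qed.

End L1Distance.

Lemma homeo_l1dist_no_interior_min (R : realType) (X Y Omega : set (R * R))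
    (f : R * R -> R * R) (w x : R * R) :
  homeo_onto X Y f -> open Y -> ~ Y w ->
  open Omega -> Omega `<=` X -> Omega x ->
  exists2 x', Omega x' & l1dist (f x') w < l1dist (f x) w.
Proof.
move=> [g [[fXY _] gf fg _ g_cont]] oY notYw oOmega OmegaX Omegax.
have Yfx : Y (f x) := fXY _ (OmegaX _ Omegax).
rewrite (continuous_open_subspace _ oY) in g_cont.
have preimage_nbhs : nbhs (f x) (g @^-1` Omega `&` Y).
  apply: filterI; last by rewrite openE in oY; exact: oY.
  apply: (g_cont _ (mem_set Yfx)); rewrite gf; last exact: OmegaX.
  by rewrite openE in oOmega; exact: oOmega.
have fxw : f x <> w by move=> fxw; apply: notYw; rewrite -fxw.
have [y [gy_Omega Yy] y_lt] := l1dist_no_local_min fxw preimage_nbhs.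
by exists (g y); rewrite // fg.
Qed.

Lemma cd_conv_l1dist_approx (R : realType) (X Y K : set (R * R))
    (hk : nat -> R * R -> R * R) (h : R * R -> R * R) (w : R * R) :
  cd_conv X Y hk h -> compact K -> K `<=` X ->
  forall e, 0 < e -> exists k, forall x, K x ->
    `|l1dist (hk k x) w - l1dist (h x) w| < e.
Proof.
move=> [hk_cvg _] cK KX e e_gt0.
have [N hkN] := hk_cvg K cK KX (e / 2) (divr_gt0 e_gt0 (ltr0Sn _ 1)).
exists N => x Kx; apply: le_lt_trans (l1dist_lipschitz _ _ _) _.
by have := hkN N (leqnn N) x Kx; lra.
Qed.

Theorem mainTheorem17 (R : realType) (l : nat) (X Y : set ((R * R)%type))
  (BX BY : 'I_l -> set ((R * R)%type)) (h : (R * R)%type -> (R * R)%type) (w : (R * R)%type)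
  (Omega : set ((R * R)%type)) :
  ell_connected X BX -> ell_connected Y BY ->
  deformation X Y BX BY h ->
  bd Y w ->
  domain Omega -> compact (closure Omega) -> closure Omega `<=` X ->
  (exists2 x, Omega x & h x = w) ->
  exists2 x, bd Omega x & h x = w.
Proof.
move=> _ [_ [[oY _] _] _ _ _] [[hk [hk_homeo hk_cvg]] _] [_ not_intYw] [oOmega _] cK KX
  [x0 Omegax0 hx0].
apply: contrapT => no_bd_preimage.
set K := closure Omega; have OmegaK : Omega `<=` K := @subset_closure _ Omega.
have hk_cont k : {within K, continuous (@l1dist R ^~ w \o hk k)}.
  have [[g [_ _ _ hk_contX _]] _] := hk_homeo k.
  have hk_contK : {within K, continuous hk k} := continuous_subspaceW KX hk_contX.
  by move=> x; exact: (continuous_comp (hk_contK x) (@continuous_l1dist _ w _)).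
have hk_approx := cd_conv_l1dist_approx w hk_cvg cK KX.
have h_cont := continuous_within_uniform_approx hk_cont hk_approx.
have [d d_gt0 d_le] : exists2 d, 0 < d & forall x, bd Omega x -> d <= l1dist (h x) w.
  apply: compact_pos_lower_bound (compact_bd_closure cK) _ _.
    by apply: continuous_subspaceW h_cont => x [].
  by move=> x bdx; apply: l1dist_gt0 => hxw; apply: no_bd_preimage; exists x.
have [k hk_close] := hk_approx _ (divr_gt0 d_gt0 (ltr0Sn _ 1)).
have hx0_dist : l1dist (h x0) w = 0 by rewrite hx0 l1distxx.
have [x [Kx bdx] x_min] :=
  approx_argmin_notin cK (hk_cont k) hk_close (OmegaK _ Omegax0) hx0_dist d_le.
have Omegax : Omega x.
  rewrite -(interior_id Omega).1 //.
  by apply: contrapT => not_int; exact: bdx.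
have notYw : ~ Y w by rewrite -(interior_id Y).1.
have [hk_homeo_k _] := hk_homeo k.
have OmegaX : Omega `<=` X by move=> y /OmegaK /KX.
have [x' Omegax' lt_x] :=
  homeo_l1dist_no_interior_min hk_homeo_k oY notYw oOmega OmegaX Omegax.
by have := x_min _ (OmegaK _ Omegax'); rewrite /= leNgt lt_x.
Qed.
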